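(* For any real matrix $A\in\mathbf{R}^{2n\times 2m}$ there exists a unique bimatrix $\{A_1,A_2\}$ with $A_1,A_2\in\mathbf{C}^{n\times m}$ such that $\{A_1,A_2\}_\circ=A$. Moreover, $A_1$ and $A_2$ are given by $$\begin{bmatrix}A_1\\ A_2\end{bmatrix}=H_nAH_m^{\mathrm H}\begin{bmatrix}I_m\\ 0_{m\times m}\end{bmatrix}.$$
   Context: $P^{\#}$ and $P^{\mathrm H}$ denote entrywise conjugate and conjugate transpose; $\mathrm{j}$ is the imaginary unit. For $A_1,A_2\in\mathbf{C}^{n\times m}$ the bimatrix $\{A_1,A_2\}$ is the real-linear map $\mathbf{C}^m\to\mathbf{C}^n$, $x\mapsto A_1x+A_2^{\#}x^{\#}$; two bimatrices are equal iff they agree as maps (equivalently, iff the defining pairs coincide). Its real representation is $\{A_1,A_2\}_\circ=\begin{bmatrix}\mathrm{Re}(A_1+A_2) & -\mathrm{Im}(A_1+A_2)\\ \mathrm{Im}(A_1-A_2) & \mathrm{Re}(A_1-A_2)\end{bmatrix}\in\mathbf{R}^{2n\times 2m}$. For each $k$, $H_k=\frac{1}{\sqrt2}\begin{bmatrix}I_k & \mathrm{j}I_k\\ I_k & -\mathrm{j}I_k\end{bmatrix}$. *)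

From HB Require Import structures.
From mathcomp Require Import all_boot all_order all_algebra.
From mathcomp Require Import complex.
Set Implicit Arguments. Unset Strict Implicit. Unset Printing Implicit Defensive.
Import Order.TTheory GRing.Theory Num.Theory.
Local Open Scope ring_scope.
Local Open Scope complex_scope.

(* Complex numbers are R[i] = complex R over a real closed field R
   (R = the reals is the case of the paper). *)

Definition mxRe (R : rcfType) (n m : nat) (M : 'M[R[i]]_(n, m)) : 'M[R]_(n, m) :=
  map_mx (@complex.Re R) M.
Definition mxIm (R : rcfType) (n m : nat) (M : 'M[R[i]]_(n, m)) : 'M[R]_(n, m) :=
  map_mx (@complex.Im R) M.
Definition mxconj (R : rcfType) (n m : nat) (M : 'M[R[i]]_(n, m)) : 'M[R[i]]_(n, m) :=
  map_mx (@conjc R) M.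
Definition mxH (R : rcfType) (n m : nat) (M : 'M[R[i]]_(n, m)) : 'M[R[i]]_(m, n) :=
  (mxconj M)^T.

Definition mxC (R : rcfType) (n m : nat) (M : 'M[R]_(n, m)) : 'M[R[i]]_(n, m) :=
  map_mx (fun x : R => x%:C) M.

Definition bimx_apply (R : rcfType) (n m : nat) (A1 A2 : 'M[R[i]]_(n, m))
  (x : 'cV[R[i]]_m) : 'cV[R[i]]_n :=
  A1 *m x + mxconj A2 *m mxconj x.

(* real representation {A1,A2}_o  in R^{2n x 2m} (2n written n + n) *)
Definition bimx_real (R : rcfType) (n m : nat) (A1 A2 : 'M[R[i]]_(n, m))
  : 'M[R]_(n + n, m + m) :=
  block_mx (mxRe (A1 + A2)) (- mxIm (A1 + A2))
           (mxIm (A1 - A2)) (mxRe (A1 - A2)).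

Definition Hmx (R : rcfType) (k : nat) : 'M[R[i]]_(k + k) :=
  ((Num.sqrt (2 : R))%:C)^-1 *:
    block_mx (1%:M : 'M[R[i]]_k) ('i%:M) (1%:M) ((- 'i)%:M).

From HB Require Import structures.
From mathcomp Require Import all_boot all_order all_algebra.
From mathcomp Require Import complex.
From mathcomp Require Import ring.
Import GRing.Theory Num.Theory.
Local Open Scope ring_scope.
Local Open Scope complex_scope.

(* Since H_k [x; y] = [x + j y; x - j y] / sqrt 2, the unitary H_k identifies
   R^(2k) with the pairs [z; z^#] of C^(2k).  Conjugating the real
   representation by these unitaries gives back the complex form of the
   bimatrix, H_n {A1,A2}_o H_m^H = [[A1, A2^#], [A2, A1^#]], whose first block
   column is [A1; A2].  This proves the formula and hence uniqueness; existence
   follows by solving the four real block equations for Re and Im of A1, A2. *)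

Lemma invC_sqrtr_mulmm (R : rcfType) (x : R) : 0 <= x ->
  (Num.sqrt x)%:C^-1 * (Num.sqrt x)%:C^-1 = (x^-1)%:C.
Proof. by move=> x_ge0; rewrite -invfM -rmorphM -expr2 sqr_sqrtr // fmorphV. Qed.

Lemma mxH_Hmx (R : rcfType) (k : nat) :
  mxH (Hmx R k) =
    (Num.sqrt (2 : R))%:C^-1 *: block_mx 1%:M 1%:M (- 'i)%:M ('i)%:M.
Proof.
set c := (Num.sqrt (2 : R))%:C^-1.
have conjcI : 'i^* = - 'i :> R[i] by apply/eqP; rewrite eq_complex /= oppr0 !eqxx.
have conjc_c : c^* = c by rewrite conjc_inv conjc_real.
rewrite /mxH /mxconj /Hmx map_mxZ map_block_mx !map_scalar_mx rmorph1 rmorphN.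
rewrite linearZ /= tr_block_mx trmx1 !tr_scalar_mx.
congr (_ *: block_mx _ _ _%:M _%:M).
- exact: conjc_c.
- exact: conjcI.
- by rewrite -[RHS]opprK; congr (- _); exact: conjcI.
Qed.

Section RealRepresentation.
Context {R : rcfType} {n m : nat}.

Lemma Hmx_bimx_real_mxH (A1 A2 : 'M[R[i]]_(n, m)) :
  Hmx R n *m mxC (bimx_real A1 A2) *m mxH (Hmx R m) =
    block_mx A1 (mxconj A2) A2 (mxconj A1).
Proof.
rewrite mxH_Hmx /Hmx /mxC /bimx_real map_block_mx.
rewrite -!scalemxAl -scalemxAr scalerA invC_sqrtr_mulmm ?ler0n //.
rewrite !mulmx_block !mul1mx !mulmx1 !mul_scalar_mx !mul_mx_scalar scale_block_mx.
congr block_mx; apply/matrixP => i j; rewrite !mxE;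
  case: (A1 i j) (A2 i j) => [a b] [x y]; apply/eqP; rewrite eq_complex /=;
  apply/andP; split; by apply/eqP; field.
Qed.

Lemma bimx_real_colE (A1 A2 : 'M[R[i]]_(n, m)) :
  col_mx A1 A2 =
    Hmx R n *m mxC (bimx_real A1 A2) *m mxH (Hmx R m) *m col_mx 1%:M 0.
Proof. by rewrite Hmx_bimx_real_mxH mul_block_col !mulmx1 !mulmx0 !addr0. Qed.

Lemma bimx_real_inj (A1 A2 B1 B2 : 'M[R[i]]_(n, m)) :
  bimx_real A1 A2 = bimx_real B1 B2 -> A1 = B1 /\ A2 = B2.
Proof.
by move=> eqAB; apply/eq_col_mx; rewrite bimx_real_colE eqAB -bimx_real_colE.
Qed.

Lemma bimx_real_surj (A : 'M[R]_(n + n, m + m)) :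
  exists A1 A2 : 'M[R[i]]_(n, m), bimx_real A1 A2 = A.
Proof.
pose P := ulsubmx A; pose Q := ursubmx A; pose S := dlsubmx A; pose T := drsubmx A.
exists (\matrix_(i, j) Complex ((P i j + T i j) / 2) ((S i j - Q i j) / 2)).
exists (\matrix_(i, j) Complex ((P i j - T i j) / 2) (- (Q i j + S i j) / 2)).
rewrite -[RHS](submxK A) /bimx_real; congr block_mx; apply/matrixP => i j.
all: by rewrite !mxE /=; field.
Qed.

End RealRepresentation.

Theorem lemma4 (R : rcfType) (n m : nat) (A : 'M[R]_(n + n, m + m)) :
  (exists A1 A2 : 'M[R[i]]_(n, m),
     bimx_real A1 A2 = A /\
     (forall B1 B2 : 'M[R[i]]_(n, m),
        bimx_real B1 B2 = A -> bimx_apply B1 B2 =1 bimx_apply A1 A2))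
  /\
  (forall A1 A2 : 'M[R[i]]_(n, m),
     bimx_real A1 A2 = A ->
     col_mx A1 A2 =
       Hmx R n *m mxC A *m mxH (Hmx R m) *m col_mx (1%:M : 'M[R[i]]_m) 0).
Proof.
split; last by move=> A1 A2 <-; exact: bimx_real_colE.
have [A1 [A2 defA]] := bimx_real_surj A.
exists A1, A2; split=> // B1 B2.
by rewrite -defA => /bimx_real_inj[-> ->].
Qed.
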